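(* Let $n,m\in\mathbb Z$, $k\le n+m$, and $a,b,q,p\in\mathbb C$ with $|p|<1$. Then \[ \binom{n+m}{k}_{a,b;q,p}=\sum_{j=k-m}^{n}\binom nj_{a,b;q,p}\binom{m}{k-j}_{aq^{2n-j},bq^{n+j};q,p}\prod_{i=1}^{k-j}W_{a,b;q,p}(i+j,n-j). \]
   Context: $\theta(x;p)=\prod_{j\ge0}(1-p^jx)(1-p^{j+1}/x)$, $\theta(x_1,\dots,x_\ell;p)=\prod_i\theta(x_i;p)$; parameters are such that denominators below do not vanish. Sum convention: $\sum_{j=l}^mA_j=A_l+\dots+A_m$ if $m>l-1$, $0$ if $m=l-1$, $-A_{l-1}-\dots-A_{m+1}$ if $m<l-1$. Product convention: $\prod_{j=l}^mA_j=A_l\cdots A_m$ if $m>l-1$, $1$ if $m=l-1$, $A_{l-1}^{-1}\cdots A_{m+1}^{-1}$ if $m<l-1$. For parameters $(a,b)$: $w_{a,b;q,p}(s,t)=\frac{\theta(aq^{s+2t},bq^{2s+t-2},aq^{t-s-1}/b;p)}{\theta(aq^{s+2t-2},bq^{2s+t},aq^{t-s+1}/b;p)}q$, $W_{a,b;q,p}(s,t)=\prod_{j=1}^tw_{a,b;q,p}(s,j)$, and $\binom nk_{a,b;q,p}$ ($n,k\in\mathbb Z$) is the unique family with $\binom n0_{a,b;q,p}=\binom nn_{a,b;q,p}=1$ and $\binom{n+1}k_{a,b;q,p}=\binom nk_{a,b;q,p}+\binom n{k-1}_{a,b;q,p}W_{a,b;q,p}(k,n+1-k)$ for $(n+1,k)\ne(0,0)$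 (closed form $\frac{(q^{1+k},aq^{1+k},bq^{1+k},aq^{1-k}/b;q,p)_{n-k}}{(q,aq,bq^{1+2k},aq/b;q,p)_{n-k}}$ with $(x;q,p)_r=\prod_{i=0}^{r-1}\theta(xq^i;p)$). The coefficient $\binom{\cdot}{\cdot}_{aq^{2n-j},bq^{n+j};q,p}$ is this with $(a,b)$ replaced by $(aq^{2n-j},bq^{n+j})$. *)

(* complex numbers are R[i] = complex R for an arbitrary
   realType R (mathcomp-real-closed's complex); for R the real numbers this is C. *)
From Stdlib Require Import ClassicalEpsilon.
From mathcomp Require Import all_boot all_order all_algebra.
From mathcomp Require Import complex.
From mathcomp Require Import reals.
Set Implicit Arguments. Unset Strict Implicit. Unset Printing Implicit Defensive.
Import Order.TTheory GRing.Theory Num.Theory.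
Local Open Scope ring_scope.
Local Open Scope complex_scope.

Section EllipticBinomial.
Variable R : realType.
Local Notation C := R[i].

Definition cvgC (u : nat -> C) (L : C) : Prop :=
  forall e : R, 0 < e -> exists N : nat, forall M : nat, (N <= M)%N -> `|u M - L| < e%:C.

Definition theta_partial (x p : C) (N : nat) : C :=
  \prod_(j < N) ((1 - p ^+ j * x) * (1 - p ^+ j.+1 / x)).

(* theta(x;p) := the limit of the partial products (it exists for |p|<1, x<>0) *)
Definition theta (x p : C) : C :=
  epsilon (inhabits 0) (cvgC (theta_partial x p)).

Definition zprod (l m : int) (A : int -> C) : C :=
  if (l - 1 <= m)%R then \prod_(i < (absz (m - l + 1)%R)) A (l + Posz i)%R
  else \prod_(i < (absz (l - 1 - m)%R)) (A (m + 1 + Posz i)%R)^-1.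

Definition zsum (l m : int) (A : int -> C) : C :=
  if (l - 1 <= m)%R then \sum_(i < (absz (m - l + 1)%R)) A (l + Posz i)%R
  else - \sum_(i < (absz (l - 1 - m)%R)) A (m + 1 + Posz i)%R.

Definition ew (a b q p : C) (s t : int) : C :=
  (theta (a * q ^ (s + 2 * t)) p * theta (b * q ^ (2 * s + t - 2)) p
     * theta (a * q ^ (t - s - 1) / b) p)
  / (theta (a * q ^ (s + 2 * t - 2)) p * theta (b * q ^ (2 * s + t)) p
     * theta (a * q ^ (t - s + 1) / b) p) * q.

Definition eW (a b q p : C) (s t : int) : C := zprod 1 t (fun j => ew a b q p s j).

Definition is_ebinom_family (a b q p : C) (F : int -> int -> C) : Prop :=
  (forall n : int, F n 0 = 1) /\ (forall n : int, F n n = 1) /\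
  (forall n k : int, (n + 1, k) <> (0, 0) ->
     F (n + 1) k = F n k + F n (k - 1) * eW a b q p k (n + 1 - k)).

Definition ebinom (a b q p : C) : int -> int -> C :=
  epsilon (inhabits (fun _ _ => 0)) (is_ebinom_family a b q p).

End EllipticBinomial.

From Stdlib Require Import ClassicalEpsilon.
From mathcomp Require Import all_boot all_order all_algebra.
From mathcomp Require Import complex.
From mathcomp Require Import reals.
From mathcomp Require Import zify ring.
Import Order.TTheory GRing.Theory Num.Theory.
Local Open Scope ring_scope.
Local Open Scope complex_scope.
Set Implicit Arguments. Unset Strict Implicit. Unset Printing Implicit Defensive.

(** Both sides of the identity, viewed as functions of k, satisfy in m the
    Pascal-type recurrence of the elliptic binomial coefficients at level n + m,
    and they agree at m = 0 because binomials with negative lower index vanish;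
    induction on m in both directions then gives the result.  The recurrence for
    the right-hand side rests on the shift relation
    w_{aq^{2n-j},bq^{n+j}}(s,t) = w_{a,b}(s+j, t+n-j), which turns into
    W_{aq^{2n-j},bq^{n+j}}(s,t) W_{a,b}(s+j,n-j) = W_{a,b}(s+j,n-j+t).
    As the coefficients are defined by choice, a family satisfying the
    recurrence is first built row by row, upwards from n = 0 and downwards
    for n < 0.  The theta function enters only through the nonvanishing
    hypothesis. *)

Lemma int_ind_succ_pred (P : int -> Prop) :
  P 0 -> (forall t, P t -> P (t + 1)) -> (forall t, P (t + 1) -> P t) ->
  forall t, P t.
Proof.
move=> P0 PS PP; elim/int_ind=> // n Pn.
- have -> : n.+1%:Z = n%:Z + 1 by lia.
  exact: PS.
- apply: PP.
  by have -> : - n.+1%:Z + 1 = - n%:Z by lia.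
Qed.

Section BinomialFamily.
Variables (K : fieldType) (W : int -> int -> K).

Definition is_binom_family (F : int -> int -> K) : Prop :=
  (forall n, F n 0 = 1) /\ (forall n, F n n = 1) /\
  (forall n k, (n + 1, k) <> (0, 0) ->
     F (n + 1) k = F n k + F n (k - 1) * W k (n + 1 - k)).

Hypothesis W_neq0 : forall s t, W s t != 0.

Lemma binom_family_eq_prev F n k : is_binom_family F -> (n + 1, k) <> (0, 0) ->
  F (n + 1) k = F n k -> F n (k - 1) = 0.
Proof.
move=> [_ [_ Frec]] nk; rewrite Frec // -{2}[F n k]addr0 => /addrI /eqP.
by rewrite mulf_eq0 (negbTE (W_neq0 _ _)) orbF => /eqP.
Qed.

Lemma binom_family_Negz F :
  is_binom_family F -> forall (N d : nat), F N (Negz d) = 0.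
Proof.
move=> famF N d; elim: d N => [|d IH] N.
- have -> : Negz 0 = 0 - 1 by [].
  apply: (binom_family_eq_prev (n := N)) => //; first by case; lia.
  by case: famF => [F0 _]; rewrite !F0.
- have -> : Negz d.+1 = Negz d - 1 by lia.
  apply: (binom_family_eq_prev (n := N)) => //.
  have -> : Posz N + 1 = Posz N.+1 by lia.
  by rewrite !IH.
Qed.

Hypothesis W_t0 : forall s, W s 0 = 1.

Fixpoint nat_row (N : nat) : int -> K :=
  match N with
  | 0 => fun k => if k == 0 then 1 else 0
  | N'.+1 => fun k => nat_row N' k + nat_row N' (k - 1) * W k (N'.+1%:Z - k)
  end.

Lemma nat_row_out N k : (k < 0) || (Posz N < k) -> nat_row N k = 0.
Proof.
elim: N k => [|N IH] k /= out_k; last by rewrite !IH ?mul0r ?addr0 //; lia.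
by case: eqP out_k => // ->.
Qed.

Lemma nat_row0 N : nat_row N 0 = 1.
Proof. by elim: N => //= N ->; rewrite nat_row_out ?mul0r ?addr0. Qed.

Lemma nat_row_diag N : nat_row N N = 1.
Proof.
elim: N => //= N IH; rewrite nat_row_out; last by lia.
have -> : Posz N.+1 - 1 = N by lia.
by rewrite IH subrr W_t0 add0r mulr1.
Qed.

Section PrevRow.
Variables (r : int -> K) (N : int) (c : K).

Fixpoint prev_row_nat (i : nat) : K :=
  match i with
  | 0 => 1
  | i'.+1 => r i'.+1 - prev_row_nat i' * W i'.+1 (N + 1 - i'.+1%:Z)
  end.

Fixpoint prev_row_Negz (i : nat) : K :=
  match i with
  | 0 => c
  | i'.+1 => (r (Negz i') - prev_row_Negz i') / W (Negz i') (N + 1 - Negz i')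
  end.

Definition prev_row (k : int) : K :=
  match k with Posz i => prev_row_nat i | Negz i => prev_row_Negz i end.

Lemma prev_row_rec k :
  k != 0 -> r k = prev_row k + prev_row (k - 1) * W k (N + 1 - k).
Proof.
case: k => [[|i]|i] k_neq0 //.
- have -> : Posz i.+1 - 1 = i by lia.
  by rewrite /= subrK.
- have -> : Negz i - 1 = Negz i.+1 by lia.
  by rewrite /= divfK // addrC subrK.
Qed.

End PrevRow.

(* The recurrence at (n + 1, k) = (0, 0) is excluded, so the value of row -1
   at -1 is free and must be chosen as 1; in lower rows it is forced to be 0. *)
Fixpoint neg_row (i : nat) : int -> K :=
  match i with
  | 0 => prev_row (nat_row 0) (Negz 0) 1
  | i'.+1 => prev_row (neg_row i') (Negz i'.+1) 0
  end.

Lemma neg_row0 i : neg_row i 0 = 1. Proof. by case: i. Qed.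

Lemma neg_row_diag i :
  neg_row i (Negz i) = 1 /\ forall k, Negz i < k < 0 -> neg_row i k = 0.
Proof.
elim: i => [|i [diag_i zero_i]]; first by split=> // k; lia.
have low d : (d <= i)%N -> prev_row_Negz (neg_row i) (Negz i.+1) 0 d = 0.
  elim: d => [|d IH] le_di //=.
  by rewrite IH ?zero_i ?subrr ?mul0r //; lia.
split=> [|[k|d] out_k].
- rewrite /= low // diag_i subr0.
  have -> : Negz i.+1 + 1 - Negz i = 0 by lia.
  by rewrite W_t0 divr1.
- lia.
- by rewrite /= low //; lia.
Qed.

Definition binom_row (n : int) : int -> K :=
  match n with Posz N => nat_row N | Negz i => neg_row i end.

Lemma binom_row_family : is_binom_family binom_row.
Proof.
split; first by case=> [N|i]; [exact: nat_row0 | exact: neg_row0].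
split; first by case=> [N|i]; [exact: nat_row_diag | exact: (neg_row_diag i).1].
case=> [N|[|i]] k nk.
- by have -> : Posz N + 1 = N.+1 by lia.
- have {1}-> : Negz 0 + 1 = 0 by lia.
  by apply: prev_row_rec; apply/eqP => k0; apply: nk; rewrite k0.
- have {1}-> : Negz i.+1 + 1 = Negz i by lia.
  have [->|] := eqVneq k 0; last exact: prev_row_rec.
  by rewrite /= neg_row0 mul0r addr0.
Qed.

End BinomialFamily.

Section IntegerRanges.
Variable R : realType.
Local Notation C := R[i].
Implicit Types (f g : int -> C) (l m t : int).

Lemma zprod1_nat f (n : nat) : zprod 1 n f = \prod_(i < n) f (1 + i%:Z).
Proof.
rewrite /zprod; have -> : (1 - 1 <= n%:Z) = true by lia.
by have -> : absz (n%:Z - 1 + 1) = n by lia.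
Qed.

Lemma zprod1_Negz f (n : nat) :
  zprod 1 (Negz n) f = \prod_(i < n.+1) (f (Negz n + 1 + i%:Z))^-1.
Proof.
rewrite /zprod; have -> : (1 - 1 <= Negz n) = false by lia.
by have -> : absz (1 - 1 - Negz n) = n.+1 by lia.
Qed.

Lemma zprod1_0 f : zprod 1 0 f = 1.
Proof. by rewrite (zprod1_nat f 0) big_ord0. Qed.

Lemma zprod_neq0 f l m : (forall i, f i != 0) -> zprod l m f != 0.
Proof.
move=> f_neq0; rewrite /zprod; case: ifP => _; apply/prodf_neq0 => i _ //.
by rewrite invr_eq0.
Qed.

Lemma eq_zprod f g l m : f =1 g -> zprod l m f = zprod l m g.
Proof.
by move=> fg; rewrite /zprod; case: ifP => _; apply: eq_bigr => i _; rewrite fg.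
Qed.

Lemma zprod1S f t : (forall i, f i != 0) ->
  zprod 1 (t + 1) f = zprod 1 t f * f (t + 1).
Proof.
move=> f_neq0; case: t => [n|[|n]].
- have -> : Posz n + 1 = n.+1 by lia.
  by rewrite !zprod1_nat big_ord_recr /=; congr (_ * f _); lia.
- by rewrite zprod1_0 zprod1_Negz big_ord1 /= addr0 mulVf.
- have -> : Negz n.+1 + 1 = Negz n by lia.
  rewrite !zprod1_Negz (big_ord_recl n.+1) /= mulrAC.
  have -> : Negz n.+1 + 1 + 0 = Negz n by lia.
  rewrite mulVf // mul1r; apply: eq_bigr => i _.
  by congr (f _)^-1; rewrite /bump /=; lia.
Qed.

Lemma zprod1D f c t : (forall i, f i != 0) ->
  zprod 1 (c + t) f = zprod 1 c f * zprod 1 t (fun l => f (l + c)).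
Proof.
move=> f_neq0.
have step s : zprod 1 (c + (s + 1)) f = zprod 1 (c + s) f * f (s + 1 + c).
  have -> : c + (s + 1) = c + s + 1 by lia.
  by rewrite zprod1S //; congr (_ * f _); lia.
elim/int_ind_succ_pred: t => [|t IH|t IH]; first by rewrite addr0 zprod1_0 mulr1.
- by rewrite step IH zprod1S // mulrA.
- by apply: (mulIf (f_neq0 (t + 1 + c))); rewrite -step IH zprod1S // mulrA.
Qed.

Lemma zsum_ord g l m (L : nat) : m = l + L - 1 ->
  zsum l m g = \sum_(i < L) g (l + i%:Z).
Proof.
move=> ->; rewrite /zsum; have -> : (l - 1 <= l + L - 1) = true by lia.
by have -> : absz (l + L - 1 - l + 1) = L by lia.
Qed.

End IntegerRanges.

Section Convolution.
Variable R : realType.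
Local Notation C := R[i].
Variables (W B : int -> int -> C) (V BV : int -> int -> int -> C) (n : int).
Hypothesis W_t0 : forall s, W s 0 = 1.
Hypothesis W_neq0 : forall s t, W s t != 0.
Hypothesis B_family : is_binom_family W B.
Hypothesis BV_family : forall j, is_binom_family (V j) (BV j).
Hypothesis V_shift :
  forall j s t, V j s t * W (s + j) (n - j) = W (s + j) (n - j + t).

Lemma V_neq0 j s t : V j s t != 0.
Proof.
apply: contra_neq (W_neq0 (s + j) (n - j + t)) => V0.
by rewrite -V_shift V0 mul0r.
Qed.

Definition conv_term m k j :=
  B n j * BV j m (k - j) * zprod 1 (k - j) (fun i => W (i + j) (n - j)).

Definition conv m k := zsum (k - m) n (conv_term m k).

Lemma zprod_W_pred j k :
  zprod 1 (k - j) (fun i => W (i + j) (n - j))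
  = zprod 1 (k - 1 - j) (fun i => W (i + j) (n - j)) * W k (n - j).
Proof.
have -> : k - j = k - 1 - j + 1 by lia.
by rewrite zprod1S //; congr (_ * W _ _); lia.
Qed.

Lemma conv_term_top m k j : k - j = m + 1 ->
  conv_term (m + 1) k j = W k (n + m + 1 - k) * conv_term m (k - 1) j.
Proof.
move=> e; rewrite /conv_term zprod_W_pred e.
have -> : k - 1 - j = m by lia.
have -> : n - j = n + m + 1 - k by lia.
have [_ [BV_diag _]] := BV_family j.
by rewrite !BV_diag; ring.
Qed.

Lemma conv_term_rec m k j : k - j <= m ->
  conv_term (m + 1) k j
  = conv_term m k j + W k (n + m + 1 - k) * conv_term m (k - 1) j.
Proof.
move=> le_kj; rewrite /conv_term zprod_W_pred.
have [_ [_ BV_rec]] := BV_family j.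
rewrite BV_rec; last by case; lia.
have := V_shift j (k - j) (m + 1 - (k - j)).
have -> : k - j + j = k by lia.
have -> : n - j + (m + 1 - (k - j)) = n + m + 1 - k by lia.
move=> <-; have -> : k - j - 1 = k - 1 - j by lia.
ring.
Qed.

Lemma conv_rec m k : k <= n + m + 1 ->
  conv (m + 1) k = conv m k + W k (n + m + 1 - k) * conv m (k - 1).
Proof.
move=> le_k; set L := absz (n - k + m + 1); rewrite /conv.
have -> : k - 1 - m = k - (m + 1) by lia.
rewrite (@zsum_ord _ _ (k - (m + 1)) n L.+1); last by lia.
rewrite (@zsum_ord _ _ (k - (m + 1)) n L.+1); last by lia.
rewrite (@zsum_ord _ _ (k - m) n L); last by lia.
rewrite !big_ord_recl /= addr0 conv_term_top; last by lia.
rewrite mulrDr mulr_sumr addrCA -big_split /=; congr (_ + _).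
apply: eq_bigr => i _.
have -> : k - (m + 1) + (bump 0 i)%:Z = k - m + i%:Z by rewrite /bump /=; lia.
by rewrite conv_term_rec //; lia.
Qed.

Lemma conv_above m : conv m (n + m + 1) = 0.
Proof. by rewrite /conv (@zsum_ord _ _ _ n 0) ?big_ord0 //; lia. Qed.

Lemma conv0 k : k <= n -> conv 0 k = B n k.
Proof.
move=> le_kn; rewrite /conv subr0 (@zsum_ord _ _ k n (absz (n - k)).+1); last by lia.
rewrite big_ord_recl big1 ?addr0 => [|i _].
  have [BV_0 _] := BV_family k.
  by rewrite /conv_term subrr BV_0 zprod1_0 !mulr1.
rewrite /conv_term.
have -> : k - (k + (lift ord0 i)%:Z) = Negz i by rewrite lift0; lia.
by rewrite (binom_family_Negz (@V_neq0 _) (BV_family _) 0) mulr0 mul0r.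
Qed.

Definition conv_agrees m := forall k, k <= n + m -> conv m k = B (n + m) k.

Lemma conv_agrees_succ m : conv_agrees m -> conv_agrees (m + 1).
Proof.
move=> agree_m k; rewrite addrA => le_k; rewrite conv_rec //.
have [_ [B_diag B_rec]] := B_family.
have [->|k_neq] := eqVneq k (n + m + 1).
  rewrite conv_above add0r B_diag subrr W_t0 mul1r.
  have -> : n + m + 1 - 1 = n + m by lia.
  by rewrite agree_m // B_diag.
by rewrite B_rec; [rewrite mulrC !agree_m //; lia | case; lia].
Qed.

Lemma conv_agrees_pred m : conv_agrees (m + 1) -> conv_agrees m.
Proof.
move=> agree_m1; have [_ [B_diag B_rec]] := B_family.
have agree k : k <= n + m + 1 -> conv (m + 1) k = B (n + m + 1) k.
  by move=> le_k; rewrite -addrA; apply: agree_m1; lia.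
suff from_top (d : nat) : conv m (n + m - d%:Z) = B (n + m) (n + m - d%:Z).
  move=> k le_k; have -> : k = n + m - (absz (n + m - k)%R)%:Z by lia.
  exact: from_top.
elim: d => [|d IH].
  have := @conv_rec m (n + m + 1) (lexx _).
  rewrite agree // conv_above B_diag add0r subrr W_t0 mul1r.
  have -> : n + m + 1 - 1 = n + m by lia.
  by rewrite subr0 B_diag.
set k := n + m - d%:Z; have -> : n + m - d.+1%:Z = k - 1 by rewrite /k; lia.
have le_k : k <= n + m + 1 by rewrite /k; lia.
have := conv_rec le_k; rewrite agree // B_rec; last by case; rewrite /k; lia.
by rewrite IH mulrC => /addrI /(mulfI (W_neq0 _ _)) ->.
Qed.

Lemma conv_eq m : conv_agrees m.
Proof.
elim/int_ind_succ_pred: m => [k|m|m]; [rewrite addr0; exact: conv0 |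
  exact: conv_agrees_succ | exact: conv_agrees_pred].
Qed.

End Convolution.

Lemma mulr_expzD (K : fieldType) (x q : K) (i j l : int) :
  q != 0 -> i + j = l -> x * q ^ i * q ^ j = x * q ^ l.
Proof. by move=> q_neq0 <-; rewrite expfzDr // mulrA. Qed.

Lemma mulr_expzD_div (K : fieldType) (x y q : K) (i j h l : int) :
  q != 0 -> i + j - h = l -> x * q ^ i * q ^ j / (y * q ^ h) = x * q ^ l / y.
Proof. by move=> q_neq0 <-; rewrite !expfzDr // -invr_expz invfM; ring. Qed.

Lemma ebinom_family (R : realType) (a b q p : R[i]) :
  (forall s t, ew a b q p s t != 0) ->
  is_binom_family (eW a b q p) (ebinom a b q p).
Proof.
move=> ew_neq0; have eW_neq0 s t : eW a b q p s t != 0 by exact: zprod_neq0.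
exact: epsilon_spec (ex_intro _ _ (binom_row_family eW_neq0 (fun s => zprod1_0 _))).
Qed.

Section EllipticWeights.
Variable R : realType.
Local Notation C := R[i].
Variables (a b q p : C).
Hypothesis q_neq0 : q != 0.

Lemma ew_shift n j s t :
  ew (a * q ^ (2 * n - j)) (b * q ^ (n + j)) q p s t
  = ew a b q p (s + j) (t + (n - j)).
Proof.
rewrite /ew; congr (theta _ p * theta _ p * theta _ p
                    / (theta _ p * theta _ p * theta _ p) * q).
all: by [apply: mulr_expzD => //; lia | apply: mulr_expzD_div => //; lia].
Qed.

Hypothesis theta_den_neq0 : forall s t,
  theta (a * q ^ (s + 2 * t - 2)) p * theta (b * q ^ (2 * s + t)) p
    * theta (a * q ^ (t - s + 1) / b) p != 0.

Lemma ew_neq0 s t : ew a b q p s t != 0.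
Proof.
have thA x : theta (a * q ^ x) p != 0.
  move: (theta_den_neq0 (x + 2) 0); have -> : x + 2 + 2 * 0 - 2 = x by lia.
  by rewrite !mulf_eq0 !negb_or => /andP[/andP[thA _] _].
have thB y : theta (b * q ^ y) p != 0.
  move: (theta_den_neq0 0 y); have -> : 2 * 0 + y = y by lia.
  by rewrite !mulf_eq0 !negb_or => /andP[/andP[_ thB] _].
have thC z : theta (a * q ^ z / b) p != 0.
  move: (theta_den_neq0 0 (z - 1)); have -> : z - 1 - 0 + 1 = z by lia.
  by rewrite !mulf_eq0 !negb_or => /andP[_ thC].
by rewrite /ew !mulf_neq0 ?invr_neq0.
Qed.

Lemma eW_shift n j s t :
  eW (a * q ^ (2 * n - j)) (b * q ^ (n + j)) q p s t * eW a b q p (s + j) (n - j)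
  = eW a b q p (s + j) (n - j + t).
Proof.
rewrite /eW [RHS]zprod1D; last exact: ew_neq0.
by rewrite mulrC; congr (_ * _); apply: eq_zprod => l; rewrite ew_shift.
Qed.

End EllipticWeights.

Theorem corollary5 (R : realType) (n m k : int) (a b q p : R[i]) :
  k <= n + m ->
  `|p| < 1 ->
  a != 0 -> b != 0 -> q != 0 ->
  (forall s t : int,
     theta (a * q ^ (s + 2 * t - 2)) p * theta (b * q ^ (2 * s + t)) p
       * theta (a * q ^ (t - s + 1) / b) p != 0) ->
  ebinom a b q p (n + m) k =
  zsum (k - m) n (fun j =>
    ebinom a b q p n j
    * ebinom (a * q ^ (2 * n - j)) (b * q ^ (n + j)) q p m (k - j)
    * zprod 1 (k - j) (fun i => eW a b q p (i + j) (n - j))).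
Proof.
move=> le_k _ _ _ q_neq0 theta_den_neq0.
have ew_neq0 := ew_neq0 q_neq0 theta_den_neq0.
have eW_t0 s : eW a b q p s 0 = 1 by exact: zprod1_0.
have eW_neq0 s t : eW a b q p s t != 0 by exact: zprod_neq0.
have shifted_family j : is_binom_family
    (eW (a * q ^ (2 * n - j)) (b * q ^ (n + j)) q p)
    (ebinom (a * q ^ (2 * n - j)) (b * q ^ (n + j)) q p).
  by apply: ebinom_family => s t; rewrite ew_shift.
symmetry; exact: (conv_eq eW_t0 eW_neq0 (ebinom_family ew_neq0) shifted_family
  (eW_shift q_neq0 theta_den_neq0 n) le_k).
Qed.
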